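(* For every $\bar g\in W$, $$T\!\left(\frac{\delta\bar g}{\delta u}\right)=\sum_{a,b\in\mathbb{Z}}\frac{\partial\bar g}{\partial p^a_b}\,e^{-i(ay+bx)}.$$
   Context: Let $u_{k_1,k_2}$ ($k_1,k_2\ge0$), $p^a_b$ ($a,b\in\mathbb{Z}$), $\epsilon$, $e^{\pm ix}$, $e^{\pm iy}$ be formal variables. Let $T:\mathbb{C}[[u_{\star,\star},\epsilon]]\to\mathbb{C}[[p^\star_\star,e^{\pm ix},e^{\pm iy},\epsilon]]$ be the ($\epsilon$-linear, multiplicative, continuous) map with $u_{k_1,k_2}\mapsto\partial_x^{k_1}\partial_y^{k_2}\big(\sum_{a,b}p^a_b e^{i(ay+bx)}\big)$, where $\partial_x,\partial_y$ act on $e^{i(ay+bx)}$ as derivatives in $x,y$. For $G$ in the target, $\bar G\in\mathbb{C}[[p^\star_\star,\epsilon]]$ denotes its coefficient of $e^{i0}$. Set $T_0(f)=\overline{T(f)}$ and $W=\mathrm{image}(T_0)$. Define derivations on $\mathbb{C}[[u_{\star,\star},\epsilon]]$ by $\partial_x f=\sum_{k_1,k_2\ge0}u_{k_1+1,k_2}\frac{\partial f}{\partial u_{k_1,k_2}}$ and $\partial_y f=\sum_{k_1,k_2\ge0}u_{k_1,k_2+1}\frac{\partial f}{\partial u_{k_1,k_2}}$. For $\bar g\in W$ choose $f$ with $T_0(f)=\bar g$ and define the variational derivative $\frac{\delta\bar g}{\delta u}=\sum_{k_1,k_2\ge0}(-1)^{k_1+k_2}\partial_x^{k_1}\partial_y^{k_2}\frac{\partial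 f}{\partial u_{k_1,k_2}}$ (independent of the choice of $f$). *)

From HB Require Import structures.
From mathcomp Require Import all_boot all_order all_algebra.
From mathcomp Require Import finmap multiset.
From mathcomp Require Import boolp classical_sets functions cardinality fsbigop.

Set Implicit Arguments.
Unset Strict Implicit.
Unset Printing Implicit Defensive.

Import Order.TTheory GRing.Theory Num.Theory.
Local Open Scope ring_scope.
Local Open Scope classical_set_scope.

(* A formal series is represented by its coefficient function.               *)
(* Source ring C[[u_{*,*}, eps]] : u-monomials are finite multisets of pairs *)
(*   (k1,k2) (the variable u_{k1,k2}); an index is (eps-exponent, monomial). *)
(* Target ring C[[p^*_*, e^{+-ix}, e^{+-iy}, eps]] : p-monomials are finite  *)
(*   multisets of pairs (a,b) (the variable p^a_b); an index is              *)
(*   (eps-exponent, p-monomial, (nx, ny)) standing for                       *)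
(*   eps^d p^P e^{i(nx x + ny y)}.                                          *)
(* Ring C[[p^*_*, eps]] (the "bar" ring): index (eps-exponent, p-monomial).  *)

Definition umon := multiset (nat * nat)%type.
Definition pmon := multiset (int * int)%type.
Definition sidx := (nat * umon)%type.
Definition tidx := (nat * pmon * (int * int))%type.
Definition bidx := (nat * pmon)%type.

Definition fsum (C : numClosedFieldType) (K : choiceType) (I : Type)
  (F : K -> I -> C) : I -> C :=
  fun i => \sum_(k \in [set: K]) F k i.

Definition sdu (C : numClosedFieldType) (k : nat * nat) (f : sidx -> C)
  : sidx -> C :=
  fun s => ((s.2 k).+1)%:R * f (s.1, msetD (msetn 1 k) s.2).

Definition smulu (C : numClosedFieldType) (j : nat * nat) (h : sidx -> C)
  : sidx -> C :=
  fun s => if j \in s.2 then h (s.1, msetB s.2 (msetn 1 j)) else 0.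

(* d_x f = sum_{k1,k2} u_{k1+1,k2} df/du_{k1,k2},
   d_y f = sum_{k1,k2} u_{k1,k2+1} df/du_{k1,k2} *)
Definition sdx (C : numClosedFieldType) (f : sidx -> C) : sidx -> C :=
  fsum (fun k : nat * nat => smulu (k.1.+1, k.2) (sdu k f)).
Definition sdy (C : numClosedFieldType) (f : sidx -> C) : sidx -> C :=
  fsum (fun k : nat * nat => smulu (k.1, k.2.+1) (sdu k f)).

Definition varder (C : numClosedFieldType) (f : sidx -> C) : sidx -> C :=
  fsum (fun k : nat * nat => fun s =>
    (-1) ^+ (k.1 + k.2) * iter k.1 (@sdx C) (iter k.2 (@sdy C) (sdu k f)) s).

Definition tadd (t1 t2 : tidx) : tidx :=
  ((t1.1.1 + t2.1.1)%N, msetD t1.1.2 t2.1.2,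
   (t1.2.1 + t2.2.1, t1.2.2 + t2.2.2)).

Definition tmono (C : numClosedFieldType) (t0 : tidx) : tidx -> C :=
  fun t => (t == t0)%:R.

Definition tmul (C : numClosedFieldType) (G H : tidx -> C) : tidx -> C :=
  fun t => \sum_(x \in [set x : tidx * tidx | tadd x.1 x.2 = t]) G x.1 * H x.2.

Definition tone (C : numClosedFieldType) : tidx -> C :=
  tmono C (0%N, mset0, (0, 0)).

(* T(u_{k1,k2}) = d_x^k1 d_y^k2 sum_{a,b} p^a_b e^{i(ay+bx)}
               = sum_{a,b} (i b)^k1 (i a)^k2 p^a_b e^{i(ay+bx)} *)
Definition Tu (C : numClosedFieldType) (k : nat * nat) : tidx -> C :=
  fsum (fun ab : int * int => fun t =>
    ('i * ab.2%:~R) ^+ k.1 * ('i * ab.1%:~R) ^+ k.2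
    * tmono C (0%N, (msetn 1 ab), (ab.2, ab.1)) t).

Definition Tmon (C : numClosedFieldType) (m : umon) : tidx -> C :=
  \big[@tmul C/tone C]_(k <- enum_mset m) Tu C k.

(* T(f) = sum_{d,m} f_{d,m} eps^d T(u^m)   (eps-linear, multiplicative,
   continuous extension) *)
Definition Tmap (C : numClosedFieldType) (f : sidx -> C) : tidx -> C :=
  fsum (fun s : sidx => fun t =>
    f s * tmul (tmono C (s.1, mset0, (0, 0))) (Tmon C s.2) t).

Definition tbar (C : numClosedFieldType) (G : tidx -> C) : bidx -> C :=
  fun b => G (b.1, b.2, (0, 0)).

Definition T0 (C : numClosedFieldType) (f : sidx -> C) : bidx -> C :=
  tbar (Tmap f).

(* Domain of T: f such that for every eps-degree d and polynomial degree n
   only finitely many u-monomials of degree n carry a nonzero coefficient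
   (this is exactly what makes all the sums defining T(f) finite; it holds
   e.g. for all differential polynomials). *)
Definition Tdom (C : numClosedFieldType) (f : sidx -> C) : Prop :=
  forall d n : nat, finite_set [set m : umon | f (d, m) != 0 /\ size (enum_mset m) = n].

Definition W (C : numClosedFieldType) : set (bidx -> C) :=
  [set g | exists f, Tdom f /\ T0 f = g].

Definition bdp (C : numClosedFieldType) (ab : int * int) (g : bidx -> C)
  : bidx -> C :=
  fun b => ((b.2 ab).+1)%:R * g (b.1, msetD (msetn 1 ab) b.2).

Definition blift (C : numClosedFieldType) (g : bidx -> C) : tidx -> C :=
  fun t => if t.2 == (0, 0) then g t.1 else 0.

Definition rhs (C : numClosedFieldType) (g : bidx -> C) : tidx -> C :=
  fsum (fun ab : int * int =>
    tmul (blift (bdp ab g)) (tmono C (0%N, mset0, (- ab.2, - ab.1)))).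

From HB Require Import structures.
From mathcomp Require Import all_boot all_order all_algebra.
From mathcomp Require Import finmap multiset.
From mathcomp Require Import boolp classical_sets functions cardinality fsbigop.
From mathcomp Require Import zify ring.

Set Implicit Arguments.
Unset Strict Implicit.
Unset Printing Implicit Defensive.

(* Everything is proved coefficientwise.  The coefficient of
   eps^d p^P e^{i(n1 x + n2 y)} in T(h) is the pairing of the eps^d-part of h
   with the coefficients m |-> [T(u^m)]_(P, n) of the images of the monomials.
   Differentiating and multiplying by u_j transpose to operations on
   monomials, and on [T(u^m)]_(P, n) the transposes of d_x and d_y act as
   multiplication by i n1 and i n2, since T(u_(k1+1,k2)) = i b T(u_k) on each
   p^a_b.  So the k-th summand of the variational derivative contributes
   (-1)^(k1+k2) (i n1)^k1 (i n2)^k2 = [T(u_k)]_(c) with c = (-n2, -n1), times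
   the pairing with df/du_k, and the chain rule
   d T(u^m)/d p^c = sum_k (d u^m/d u_k) d T(u_k)/d p^c turns the sum over k
   into the coefficient of d T0(f)/d p^c. *)

Import Order.TTheory GRing.Theory Num.Theory.
Local Open Scope ring_scope.
Local Open Scope classical_set_scope.
Local Open Scope mset_scope.

Section FiniteSupportSums.
Variable R : nmodType.

Lemma fsum_uniq_seq (K : choiceType) (A : set K) (F : K -> R) (r : seq K) :
  uniq r -> (forall k, k \in r -> A k) -> (forall k, A k -> F k != 0 -> k \in r) ->
  \sum_(k \in A) F k = \sum_(k <- r) F k.
Proof.
move=> ur rA Asupp; rewrite (fsbigE r) //.
- rewrite big_seq_cond [RHS]big_seq; apply: eq_bigl => k.
  by case: (boolP (k \in r)) => //= /rA Ak; rewrite (mem_set Ak).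
- by move=> k Ak; apply: contraNeq; apply: Asupp.
Qed.

Lemma fsumT_undup (K : choiceType) (F : K -> R) (r : seq K) :
  (forall k, F k != 0 -> k \in r) ->
  \sum_(k \in [set: K]) F k = \sum_(k <- undup r) F k.
Proof.
move=> supp; apply: fsum_uniq_seq; rewrite ?undup_uniq //.
by move=> k _; rewrite mem_undup; apply: supp.
Qed.

Lemma fsumT_neq0 (K : choiceType) (F : K -> R) :
  \sum_(k \in [set: K]) F k != 0 -> exists k, F k != 0.
Proof.
move=> sum_neq0; apply: contrapT => /forallNP F0; move: sum_neq0.
by rewrite fsbig1 ?eqxx // => k _; apply/eqP/negPn/negP/F0.
Qed.

Lemma sum_seq_neq0 (K : eqType) (F : K -> R) (r : seq K) :
  \sum_(k <- r) F k != 0 -> exists2 k, k \in r & F k != 0.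
Proof.
move=> sum_neq0; apply: contrapT => F0; move: sum_neq0.
rewrite big1_seq ?eqxx // => k /andP[_ kr].
by apply/eqP/negPn/negP => Fk; apply: F0; exists k.
Qed.

Lemma exchange_fsumT (I J : choiceType) (F : I -> J -> R) :
  finite_set [set ij : I * J | F ij.1 ij.2 != 0] ->
  \sum_(i \in [set: I]) \sum_(j \in [set: J]) F i j =
  \sum_(j \in [set: J]) \sum_(i \in [set: I]) F i j.
Proof.
move=> /finite_seqP [r supp_r].
have supp_ij i j : F i j != 0 -> (i, j) \in r.
  by move=> Fij; have : [set` r] (i, j) by rewrite -supp_r.
have suppI i j : F i j != 0 -> i \in map fst r.
  by move/supp_ij => ijr; apply/mapP; exists (i, j).
have suppJ i j : F i j != 0 -> j \in map snd r.
  by move/supp_ij => ijr; apply/mapP; exists (i, j).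
transitivity (\sum_(i <- undup (map fst r)) \sum_(j <- undup (map snd r)) F i j).
  rewrite (fsumT_undup (r := map fst r)); last by move=> i /fsumT_neq0 [j /suppI].
  by apply: eq_bigr => i _; apply: fsumT_undup => j /suppJ.
rewrite exchange_big (fsumT_undup (r := map snd r)) /=; last first.
  by move=> j /fsumT_neq0 [i /suppJ].
by apply: eq_bigr => j _; rewrite (fsumT_undup (r := map fst r)) // => i /suppI.
Qed.

Lemma reindex_fsumT (I J : choiceType) (h : I -> J) (F : I -> R) (G : J -> R) :
  (forall i, F i != 0 -> G (h i) = F i) ->
  (forall i i', F i != 0 -> F i' != 0 -> h i = h i' -> i = i') ->
  (forall j, G j != 0 -> exists2 i, F i != 0 & h i = j) ->
  \sum_(j \in [set: J]) G j = \sum_(i \in [set: I]) F i.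
Proof.
move=> GhF hinj hsurj; rewrite fsbig_supp [RHS]fsbig_supp.
rewrite (reindex_fsbig h (setT `&` F @^-1` [set~ 0]) (setT `&` G @^-1` [set~ 0])).
  by apply: eq_fsbigr => i; rewrite inE => -[_ /eqP Fi]; apply: GhF.
split.
- by move=> i [_ /eqP Fi]; split=> //=; rewrite GhF //; apply/eqP.
- by move=> i i'; rewrite !inE => -[_ /eqP Fi] [_ /eqP Fi']; apply: hinj.
- move=> j [_ /eqP Gj]; have [i Fi <-] := hsurj j Gj.
  by exists i => //; split=> //=; apply/eqP.
Qed.

Lemma big_undup_guard (K : choiceType) (s r : seq K) (F : K -> R) :
  {subset s <= r} ->
  \sum_(k <- undup s) F k = \sum_(k <- undup r) (if k \in s then F k else 0).
Proof.
move=> sr; rewrite -(fsumT_undup (r := r)); last first.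
  by move=> k; case: ifP => [/sr //|_]; rewrite eqxx.
rewrite (fsumT_undup (r := s)); last by move=> k; case: ifP => // _; rewrite eqxx.
by apply: eq_big_seq => k; rewrite mem_undup => ->.
Qed.

End FiniteSupportSums.

Lemma fsum_mset (R : pzSemiRingType) (K : choiceType) (X : {mset K}) (F : K -> R) :
  \sum_(k \in [set: K]) (X k)%:R * F k = \sum_(k <- X) F k.
Proof.
rewrite (fsumT_undup (r := X)); last first.
  by move=> k; apply: contraNT; rewrite -mset_eq0 => /eqP ->; rewrite mul0r.
rewrite -[RHS]big_undup_iterop_count; apply: eq_bigr => k _.
by rewrite count_mem_mset Monoid.iteropE iter_addr addr0 mulr_natl.
Qed.

Section MultisetFacts.
Variable K : choiceType.
Implicit Types (a b x : K) (m : {mset K}).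

Lemma mset1D_inj a : injective (msetD [mset a]).
Proof. exact: (can_inj (g := fun m => m `\ a)) (msetD1K a). Qed.

Lemma mset1_inj : injective (fun a => [mset a]).
Proof. by move=> a b eq_ab; apply/eqP; rewrite -in_mset1 -eq_ab in_mset1. Qed.

Lemma perm_mset1D a m : perm_eq (a +` m) (a :: m).
Proof.
have -> : a +` m = seq_mset (a :: m).
  by rewrite mset_cons seq_mset_id.
exact: perm_eq_seq_mset.
Qed.

Lemma size_mset1D a m : size (a +` m) = (size m).+1.
Proof. by rewrite (perm_size (perm_mset1D a m)). Qed.

Lemma size_msetB1 a m : a \in m -> size m = (size (m `\ a)).+1.
Proof. by move=> am; rewrite -(size_mset1D a) msetB1K. Qed.

Lemma msetB1C a b m : m `\ a `\ b = m `\ b `\ a.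
Proof. by rewrite -!msetBDA msetDC. Qed.

Lemma mset1DB1 a b m : b \in m -> (a +` m) `\ b = a +` (m `\ b).
Proof.
rewrite in_mset => bm; apply/msetP => x; rewrite !(msetB1E, mset1DE).
by case: (eqVneq x b) => [->|_]; case: (_ == a) => /=; lia.
Qed.

Lemma msetB1_sub a x m : x \in m `\ a -> x \in m.
Proof. by rewrite in_msetB1 => /andP[]. Qed.

Lemma in_msetB1C a b m :
  (b \in m `\ a) && (a \in m) = (a \in m `\ b) && (b \in m).
Proof.
case: (eqVneq a b) => [-> //|neq_ab].
rewrite !in_msetB1 (negPf neq_ab) eq_sym (negPf neq_ab) /=.
by rewrite andbC.
Qed.

Lemma mset_ind (P : {mset K} -> Prop) :
  P mset0 -> (forall a m, P m -> P (a +` m)) -> forall m, P m.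
Proof.
move=> P0 PS m; have [n] := ubnP (size m); elim: n m => // n IH m.
case: (mset_0Vmem m) => [-> //|[a am]] size_m.
by rewrite -(msetB1K am); apply/PS/IH; rewrite -ltnS -(size_msetB1 am).
Qed.

Lemma sum_mset1D (R : nmodType) a m (G : K -> {mset K} -> R) :
  \sum_(k <- a +` m) G k ((a +` m) `\ k) =
  G a m + \sum_(k <- m) G k (a +` (m `\ k)).
Proof.
rewrite (perm_big _ (perm_mset1D a m)) big_cons msetD1K; congr (_ + _).
by apply: eq_big_seq => k km; rewrite mset1DB1.
Qed.

End MultisetFacts.

Section TargetSeries.
Variable C : numClosedFieldType.
Implicit Types (d e : nat) (P : {mset int * int}) (G : tidx -> C).

Definition Tu_coef (k : nat * nat) (ab : int * int) : C :=
  ('i * ab.2%:~R) ^+ k.1 * ('i * ab.1%:~R) ^+ k.2.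

Lemma tmonoE (t0 t : tidx) : tmono C t0 t = if t == t0 then 1 else 0.
Proof. by rewrite /tmono; case: (t == t0). Qed.

Lemma tmul_tmono_eps e G d P n1 n2 :
  tmul (tmono C (e, mset0, (0, 0))) G (d, P, (n1, n2)) =
  if (e <= d)%N then G ((d - e)%N, P, (n1, n2)) else 0.
Proof.
rewrite /tmul; case: leqP => le_ed.
- rewrite (fsum_uniq_seq (r := [:: ((e, mset0, (0, 0)), ((d - e)%N, P, (n1, n2)))])) //.
  + by rewrite big_seq1 tmonoE eqxx mul1r.
  + move=> x; rewrite inE => /eqP -> /=; rewrite /tadd /= mset0D !add0r.
    by congr (_, _, _); lia.
  + move=> [[[e1 P1] [a1 b1]] [[e2 P2] [a2 b2]]]; rewrite /tadd /= => -[<- <- <- <-].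
    rewrite tmonoE; case: ifP => [/eqP [-> -> -> ->]|_]; last by rewrite mul0r eqxx.
    by rewrite mset0D !add0r addKn inE.
- rewrite (fsum_uniq_seq (r := [::])) ?big_nil //.
  move=> [[[e1 P1] [a1 b1]] [[e2 P2] [a2 b2]]]; rewrite /tadd /= => -[E _ _ _].
  rewrite tmonoE; case: ifP => [/eqP [E1 _ _ _]|_]; last by rewrite mul0r eqxx.
  by exfalso; lia.
Qed.

Lemma tmul_tmono_shift v1 v2 G d P n1 n2 :
  tmul G (tmono C (0%N, mset0, (v1, v2))) (d, P, (n1, n2)) =
  G (d, P, (n1 - v1, n2 - v2)).
Proof.
rewrite /tmul
  (fsum_uniq_seq (r := [:: ((d, P, (n1 - v1, n2 - v2)), (0%N, mset0, (v1, v2)))])) //.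
- by rewrite big_seq1 tmonoE eqxx mulr1.
- move=> x; rewrite inE => /eqP -> /=; rewrite /tadd /= msetD0 !subrK.
  by congr (_, _, _); lia.
- move=> [[[e1 P1] [a1 b1]] [[e2 P2] [a2 b2]]]; rewrite /tadd /= => -[<- <- <- <-].
  rewrite tmonoE; case: ifP => [/eqP [-> -> -> ->]|_]; last by rewrite mulr0 eqxx.
  by rewrite msetD0 !addrK addn0 inE.
Qed.

Lemma Tu_supp k (t : tidx) :
  Tu C k t != 0 -> exists ab : int * int, t = (0%N, [mset ab], (ab.2, ab.1)).
Proof.
rewrite /Tu /fsum => /fsumT_neq0 [ab]; rewrite tmonoE.
by case: ifP => [/eqP ->|_]; [exists ab | rewrite mulr0 eqxx].
Qed.

Lemma coef_Tu k (ab : int * int) :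
  Tu C k (0%N, [mset ab], (ab.2, ab.1)) = Tu_coef k ab.
Proof.
rewrite /Tu /fsum (fsumT_undup (r := [:: ab])) /= ?big_seq1 ?tmonoE ?eqxx ?mulr1 //.
move=> cd; rewrite tmonoE; case: ifP => [/eqP [/mset1_inj -> _ _ _]|_].
  by rewrite inE.
by rewrite mulr0 eqxx.
Qed.

Lemma tmul_Tu k G d P n1 n2 :
  tmul (Tu C k) G (d, P, (n1, n2)) =
  \sum_(ab <- undup P) Tu_coef k ab * G (d, P `\ ab, (n1 - ab.2, n2 - ab.1)).
Proof.
pose split_at (ab : int * int) : tidx * tidx :=
  ((0%N, [mset ab], (ab.2, ab.1)), (d, P `\ ab, (n1 - ab.2, n2 - ab.1))).
rewrite /tmul (fsum_uniq_seq (r := map split_at (undup P))).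
- by rewrite big_map; apply: eq_bigr => ab _; rewrite /split_at /= coef_Tu.
- by rewrite map_inj_uniq ?undup_uniq // => ab cd [/mset1_inj].
- move=> x /mapP [ab]; rewrite mem_undup => abP -> /=; rewrite /tadd /=.
  by rewrite msetB1K // add0n !(addrC ab.2) !(addrC ab.1) !subrK.
- move=> [x1 x2] /= sum_x; rewrite mulf_eq0 negb_or => /andP [/Tu_supp [ab x1E] _].
  subst x1; move: sum_x; case: x2 => [[e2 P2] [a2 b2]]; rewrite /tadd /= => -[? ? ? ?]; subst.
  apply/mapP; exists ab; first by rewrite mem_undup; apply: mset1D1.
  by rewrite /split_at msetD1K add0n !(addrC ab.2) !(addrC ab.1) !addrK.
Qed.

Definition Tprod (s : seq (nat * nat)) : tidx -> C :=
  \big[@tmul C/tone C]_(k <- s) Tu C k.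

Lemma Tprod_cons k s : Tprod (k :: s) = tmul (Tu C k) (Tprod s).
Proof. by rewrite /Tprod big_cons. Qed.

Lemma Tprod_swap k l s : Tprod (k :: l :: s) = Tprod (l :: k :: s).
Proof.
apply: funext => -[[d P] [n1 n2]]; rewrite !Tprod_cons !tmul_Tu.
have expand (k1 k2 : nat * nat) :
  \sum_(ab <- undup (enum_mset P)) Tu_coef k1 ab * tmul (Tu C k2) (Tprod s)
     (d, P `\ ab, (n1 - ab.2, n2 - ab.1)) =
  \sum_(ab <- undup (enum_mset P)) \sum_(cd <- undup (enum_mset P))
     (if (cd \in P `\ ab) && (ab \in P) then
        Tu_coef k1 ab * Tu_coef k2 cd *
        Tprod s (d, P `\ ab `\ cd, (n1 - ab.2 - cd.2, n2 - ab.1 - cd.1))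
      else 0).
  apply: eq_big_seq => ab; rewrite mem_undup => abP.
  rewrite tmul_Tu (big_undup_guard (r := enum_mset P)); last by move=> cd /msetB1_sub.
  rewrite mulr_sumr; apply: eq_bigr => cd _; rewrite abP andbT.
  by case: ifP => _; rewrite ?mulr0 ?mulrA.
rewrite !expand [in RHS]exchange_big /=.
apply: eq_bigr => ab _; apply: eq_bigr => cd _.
rewrite in_msetB1C msetB1C; case: ifP => // _.
by rewrite [Tu_coef k ab * _]mulrC (addrAC n1) (addrAC n2).
Qed.

Lemma Tprod_cat_cons s1 k s2 : Tprod (s1 ++ k :: s2) = Tprod (k :: s1 ++ s2).
Proof.
elim: s1 => [//|l s1 IH] /=.
by rewrite Tprod_cons IH -Tprod_cons Tprod_swap.
Qed.

Lemma Tprod_perm s s' : perm_eq s s' -> Tprod s = Tprod s'.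
Proof.
elim: s s' => [|k s IH] s' eq_ss'.
  by have := perm_size eq_ss'; case: s' eq_ss'.
have ks' : k \in s' by rewrite -(perm_mem eq_ss') mem_head.
case/splitPr: ks' eq_ss' => s1 s2 eq_ss'.
rewrite Tprod_cat_cons !Tprod_cons (IH (s1 ++ s2)) //.
by rewrite -(perm_cons k) (perm_trans eq_ss') // -cat1s perm_catCA.
Qed.

Lemma Tmon_mset1D k (m : {mset nat * nat}) :
  Tmon C (k +` m) = tmul (Tu C k) (Tmon C m).
Proof. by rewrite -Tprod_cons -(Tprod_perm (perm_mset1D k m)). Qed.

Lemma Tprod_eps s e P n1 n2 : e != 0%N -> Tprod s (e, P, (n1, n2)) = 0.
Proof.
move=> e_neq0; elim: s P n1 n2 => [|k s IH] P n1 n2.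
  by rewrite /Tprod big_nil /tone tmonoE; case: ifP => // /eqP [e0]; rewrite e0 in e_neq0.
by rewrite Tprod_cons tmul_Tu big1 // => ab _; rewrite IH mulr0.
Qed.

Lemma Tprod_size s P n1 n2 :
  Tprod s (0%N, P, (n1, n2)) != 0 -> size s = size P.
Proof.
elim: s P n1 n2 => [|k s IH] P n1 n2.
  rewrite /Tprod big_nil /tone tmonoE.
  by case: ifP => [/eqP [-> _ _] _|_]; rewrite ?enum_mset0 ?eqxx.
rewrite Tprod_cons tmul_Tu => /sum_seq_neq0 [ab]; rewrite mem_undup => abP.
by rewrite mulf_eq0 negb_or => /andP [_ /IH /= ->]; rewrite (size_msetB1 abP).
Qed.

End TargetSeries.

Section MonomialCoefficients.
Variable C : numClosedFieldType.
Implicit Types (m : {mset nat * nat}) (P : {mset int * int}).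

Definition Tcoef m P n1 n2 : C := Tmon C m (0%N, P, (n1, n2)).

Definition sder_dual (e : nat * nat -> nat * nat) (phi : umon -> C) m : C :=
  \sum_(k <- m) phi (e k +` (m `\ k)).

Lemma Tmon_eps m e P n1 n2 : e != 0%N -> Tmon C m (e, P, (n1, n2)) = 0.
Proof. exact: Tprod_eps. Qed.

Lemma Tcoef_size m P n1 n2 : Tcoef m P n1 n2 != 0 -> size m = size P.
Proof. exact: Tprod_size. Qed.

Lemma Tcoef_mset0 P n1 n2 :
  Tcoef mset0 P n1 n2 != 0 -> [/\ P = mset0, n1 = 0 & n2 = 0].
Proof.
rewrite /Tcoef /Tmon enum_mset0 big_nil /tone tmonoE.
by case: ifP => [/eqP [-> -> ->] //|_]; rewrite eqxx.
Qed.

Lemma Tcoef_mset1D a m P n1 n2 :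
  Tcoef (a +` m) P n1 n2 =
  \sum_(ab <- undup P) Tu_coef C a ab * Tcoef m (P `\ ab) (n1 - ab.2) (n2 - ab.1).
Proof. by rewrite /Tcoef Tmon_mset1D tmul_Tu. Qed.

Lemma sder_dual_Tcoef (e : nat * nat -> nat * nat) (pi : int * int -> int) :
  (forall k ab, Tu_coef C (e k) ab = 'i * (pi (ab.2, ab.1))%:~R * Tu_coef C k ab) ->
  (forall x y : int * int, pi (x.1 - y.1, x.2 - y.2) = pi x - pi y) ->
  forall m P n1 n2,
  sder_dual e (fun m' => Tcoef m' P n1 n2) m = 'i * (pi (n1, n2))%:~R * Tcoef m P n1 n2.
Proof.
move=> Tu_coef_e pi_sub; elim/mset_ind => [|a m IH] P n1 n2.
  rewrite /sder_dual enum_mset0 big_nil.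
  have [-> | /Tcoef_mset0 [_ -> ->]] := eqVneq (Tcoef mset0 P n1 n2) 0.
    by rewrite mulr0.
  by have := pi_sub (0, 0) (0, 0); rewrite /= subr0 subrr => ->; rewrite mulr0 mul0r.
rewrite /sder_dual (sum_mset1D a m (fun k X => Tcoef (e k +` X) P n1 n2)) /=.
under eq_bigr => k _ do rewrite msetDCA Tcoef_mset1D.
rewrite exchange_big !Tcoef_mset1D mulr_sumr -big_split; apply: eq_bigr => ab _ /=.
rewrite -mulr_sumr; have := IH (P `\ ab) (n1 - ab.2) (n2 - ab.1).
rewrite /sder_dual => ->.
have /= -> := pi_sub (n1, n2) (ab.2, ab.1).
by rewrite Tu_coef_e intrB; ring.
Qed.

(* The chain rule d T(u^m)/d p^c = sum_k (d u^m/d u_k) d T(u_k)/d p^c. *)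
Lemma Tcoef_chain_rule (c : int * int) m P v1 v2 :
  ((P c).+1)%:R * Tcoef m (c +` P) v1 v2 =
  \sum_(k <- m) Tu_coef C k c * Tcoef (m `\ k) P (v1 - c.2) (v2 - c.1).
Proof.
elim/mset_ind: m P v1 v2 => [|a m IH] P v1 v2.
  rewrite enum_mset0 big_nil.
  have [-> | /Tcoef_mset0 [cP0 _ _]] := eqVneq (Tcoef mset0 (c +` P) v1 v2) 0.
    by rewrite mulr0.
  by have := mset1D1 c P; rewrite cP0 in_mset0.
have expand_rhs :
    \sum_(k <- a +` m) Tu_coef C k c * Tcoef ((a +` m) `\ k) P (v1 - c.2) (v2 - c.1) =
    Tu_coef C a c * Tcoef m P (v1 - c.2) (v2 - c.1) +
    \sum_(ab <- undup P) Tu_coef C a ab *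
      (((P `\ ab) c).+1%:R * Tcoef m (c +` (P `\ ab)) (v1 - ab.2) (v2 - ab.1)).
  rewrite (sum_mset1D a m (fun k X => Tu_coef C k c * Tcoef X P (v1 - c.2) (v2 - c.1))).
  congr (_ + _); under eq_bigr => k _ do rewrite Tcoef_mset1D mulr_sumr.
  rewrite exchange_big; apply: eq_bigr => ab _; rewrite IH mulr_sumr.
  by apply: eq_bigr => k _; rewrite (addrAC v1) (addrAC v2); ring.
rewrite expand_rhs Tcoef_mset1D.
rewrite (big_undup_guard (r := c :: P)); last by move=> x; rewrite in_mset1D.
rewrite [in RHS](big_undup_guard (r := c :: P)); last first.
  by move=> x xP; rewrite in_cons xP orbT.
have cU : c \in undup (c :: P) by rewrite mem_undup mem_head.
rewrite (bigD1_seq c) ?undup_uniq // [in RHS](bigD1_seq c) ?undup_uniq //=.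
rewrite mset1D1 msetD1K mulrDr addrA; congr (_ + _).
  case: (boolP (c \in P)) => cP; last by move/mset_eq0P: cP => ->; rewrite mul1r addr0.
  rewrite msetB1K // msetB1E eqxx subn1 prednK ?mset_gt0 // mulrS.
  by ring.
rewrite mulr_sumr; apply: eq_bigr => ab ab_neq_c.
rewrite in_mset1D (negPf ab_neq_c) /=; case: ifP => abP; last by rewrite mulr0.
by rewrite mset1DB1 // msetB1E [c == ab]eq_sym (negPf ab_neq_c) subn0 mulrCA.
Qed.

End MonomialCoefficients.

Section Pairing.
Variable C : numClosedFieldType.
Implicit Types (h : sidx -> C) (phi : umon -> C) (d n : nat) (m : {mset nat * nat}).

(* A finitely supported sum over an infinite support is 0, so transposing
   through [pairing] needs the layers of [h] to be finite; [Tdom f] says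
   exactly that every layer of [f] is finite. *)
Definition pairing h d phi : C := \sum_(m \in [set: umon]) h (d, m) * phi m.

Definition finite_layer h d n :=
  finite_set [set m : {mset nat * nat} | h (d, m) != 0 /\ size m = n].

Definition homogeneous phi n := forall m, phi m != 0 -> size m = n.

(* [sdx] and [sdy] unfold to instances of [sder]. *)
Definition sder (e : nat * nat -> nat * nat) h : sidx -> C :=
  fsum (fun k => smulu (e k) (sdu k h)).

Lemma finite_layer_mem h d n : finite_layer h d n ->
  finite_set [set mk : {mset nat * nat} * (nat * nat) |
    (h (d, mk.1) != 0 /\ size mk.1 = n) /\ mk.2 \in mk.1].
Proof.
move=> fin_h; apply: sub_finite_set (finite_setXR fin_h _); last first.
  by move=> m _; apply/finite_seqP; exists (enum_mset m).
by move=> [m k] [layer_m km]; split.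
Qed.

Lemma pairing_sdu k h d phi :
  pairing (sdu k h) d phi = pairing h d (fun m => (m k)%:R * phi (m `\ k)).
Proof.
symmetry; apply: (reindex_fsumT (h := msetD [mset k])).
- by move=> m _; rewrite /sdu /= mset1DE eqxx msetD1K add1n mulrCA mulrA.
- by move=> m m' _ _ /mset1D_inj.
- move=> m; rewrite mulf_eq0 negb_or => /andP [h_neq0 phi_neq0].
  have km : k \in (m : {mset nat * nat}).
    by apply: contraNT phi_neq0 => /mset_eq0P ->; rewrite mul0r.
  exists (m `\ k); last by rewrite msetB1K.
  rewrite /sdu /= msetB1K // msetB1E eqxx subn1 prednK ?mset_gt0 //.
  by rewrite mulrAC mulf_neq0.
Qed.

Lemma pairing_smulu j h d phi :
  pairing (smulu j h) d phi = pairing h d (fun m => phi (j +` m)).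
Proof.
apply: (reindex_fsumT (h := msetD [mset j])).
- by move=> m _; rewrite /smulu /= mset1D1 msetD1K.
- by move=> m m' _ _ /mset1D_inj.
- move=> m; rewrite /smulu /=; case: ifP => [jm|_]; last by rewrite mul0r eqxx.
  by move=> smul_neq0; exists (m `\ j); rewrite msetB1K.
Qed.

Lemma smulu_sdu_supp j k h d m : smulu j (sdu k h) (d, m) != 0 ->
  exists m' : {mset nat * nat}, [/\ h (d, m') != 0, k \in m' & m = j +` (m' `\ k)].
Proof.
rewrite /smulu /=; case: ifP => [jm|_]; last by rewrite eqxx.
rewrite /sdu /= mulf_eq0 negb_or => /andP [_ h_neq0].
exists (k +` (m `\ j)); split => //; first exact: mset1D1.
by rewrite msetD1K msetB1K.
Qed.

Lemma sder_supp e h d m : sder e h (d, m) != 0 ->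
  exists k (m' : {mset nat * nat}), [/\ h (d, m') != 0, k \in m' & m = e k +` (m' `\ k)].
Proof. by move=> /fsumT_neq0 [k /smulu_sdu_supp supp]; exists k. Qed.

Lemma size_sder_supp e (k : nat * nat) m : k \in m -> size (e k +` (m `\ k)) = size m.
Proof. by move=> km; rewrite size_mset1D -size_msetB1. Qed.

Lemma iter_sder_supp e a h d m : iter a (sder e) h (d, m) != 0 ->
  exists2 m' : {mset nat * nat}, h (d, m') != 0 & size m' = size m.
Proof.
elim: a m => [|a IH] m; first by exists m.
rewrite iterS => /sder_supp [k [m' [/IH [m'' h_neq0 size_m''] km ->]]].
by exists m''; rewrite // size_sder_supp.
Qed.

Lemma finite_layer_sdu k h d n : finite_layer h d n.+1 -> finite_layer (sdu k h) d n.
Proof.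
move=> fin_h; apply: sub_finite_set (finite_image (fun m => m `\ k) fin_h).
move=> m [sdu_neq0 size_m]; exists (k +` m); last exact: msetD1K.
split; last by rewrite size_mset1D size_m.
by move: sdu_neq0; rewrite /sdu /= mulf_eq0 negb_or => /andP [].
Qed.

Lemma finite_layer_sder e h d n : finite_layer h d n -> finite_layer (sder e h) d n.
Proof.
move=> /finite_layer_mem fin_h.
apply: sub_finite_set (finite_image (fun mk => e mk.2 +` (mk.1 `\ mk.2)) fin_h).
move=> m [/sder_supp [k [m' [h_neq0 km ->]]] size_m].
by exists (m', k); rewrite //= -size_m size_sder_supp.
Qed.

Lemma finite_layer_iter_sder e a h d n :
  finite_layer h d n -> finite_layer (iter a (sder e) h) d n.
Proof. by move=> fin_h; elim: a => [//|a IH]; rewrite iterS; apply: finite_layer_sder. Qed.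

Lemma pairing_sder e h d n phi : finite_layer h d n -> homogeneous phi n ->
  pairing (sder e h) d phi = pairing h d (sder_dual e phi).
Proof.
move=> /finite_layer_mem fin_h hom_phi.
transitivity (\sum_(k \in [set: nat * nat]) pairing (smulu (e k) (sdu k h)) d phi).
  rewrite /pairing /sder /fsum; under eq_fsbigr => m _ do rewrite mulr_fsuml.
  apply: exchange_fsumT.
  apply: sub_finite_set (finite_image (fun mk => (e mk.2 +` (mk.1 `\ mk.2), mk.2)) fin_h).
  move=> [m k]; rewrite /= mulf_eq0 negb_or.
  move=> /andP [/smulu_sdu_supp [m' [h_neq0 km' ->]] /hom_phi].
  by rewrite size_sder_supp // => size_m'; exists (m', k).
under eq_fsbigr => k _ do rewrite pairing_smulu pairing_sdu.
rewrite /pairing -exchange_fsumT.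
  by apply: eq_fsbigr => m _; rewrite -mulr_fsumr fsum_mset.
apply: sub_finite_set fin_h => -[m k] /=.
rewrite !mulf_eq0 !negb_or pnatr_eq0 -lt0n mset_gt0 => /and3P [h_neq0 km /hom_phi].
by rewrite size_sder_supp.
Qed.

Lemma pairing_iter_sder e a h d n phi (c : C) :
  finite_layer h d n -> homogeneous phi n -> (forall m, sder_dual e phi m = c * phi m) ->
  pairing (iter a (sder e) h) d phi = c ^+ a * pairing h d phi.
Proof.
move=> fin_h hom_phi eigen_phi; elim: a => [|a IH]; first by rewrite expr0 mul1r.
rewrite iterS (pairing_sder _ (finite_layer_iter_sder e a fin_h) hom_phi).
rewrite (_ : sder_dual e phi = fun m => c * phi m); last exact: funext.
have -> : pairing (iter a (sder e) h) d (fun m => c * phi m) =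
    c * pairing (iter a (sder e) h) d phi.
  by rewrite /pairing mulr_fsumr; apply: eq_fsbigr => m _; rewrite mulrCA.
by rewrite IH exprS mulrA.
Qed.

End Pairing.

Section VariationalDerivative.
Variable C : numClosedFieldType.
Implicit Types (f h : sidx -> C) (d : nat) (P : {mset int * int}).

Lemma Tmap_pairing h d P n1 n2 :
  Tmap h (d, P, (n1, n2)) = pairing h d (fun m => Tcoef C m P n1 n2).
Proof.
apply: (reindex_fsumT (h := fun m : umon => (d, m))).
- by move=> m _ /=; rewrite tmul_tmono_eps leqnn subnn.
- by move=> m m' _ _ [].
- move=> [d' m] /=; rewrite tmul_tmono_eps; case: leqP => le_d'd; last first.
    by rewrite mulr0 eqxx.
  have [d'_eq | d'_neq] := eqVneq (d - d')%N 0%N; last by rewrite Tmon_eps // mulr0 eqxx.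
  have -> : d' = d by lia.
  by rewrite subnn => Tmap_neq0; exists m.
Qed.

Lemma rhsE (g : bidx -> C) d P n1 n2 : rhs g (d, P, (n1, n2)) = bdp (- n2, - n1) g (d, P).
Proof.
rewrite /rhs /fsum (fsumT_undup (r := [:: (- n2, - n1)])).
  by rewrite /= big_seq1 tmul_tmono_shift /blift /= !opprK !subrr.
move=> [a b]; rewrite tmul_tmono_shift /blift /=.
case: ifP => [/eqP [a_eq b_eq] _|_]; last by rewrite eqxx.
by rewrite mem_seq1; apply/eqP; congr pair; lia.
Qed.

Lemma T0_pairing f d P : T0 f (d, P) = pairing f d (fun m => Tcoef C m P 0 0).
Proof. exact: Tmap_pairing. Qed.

Lemma homogeneous_Tcoef P n1 n2 : homogeneous (fun m => Tcoef C m P n1 n2) (size P).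
Proof. by move=> m /Tcoef_size. Qed.

Lemma sder_dual_Tcoef_x m P n1 n2 :
  sder_dual (fun k => (k.1.+1, k.2)) (fun m' => Tcoef C m' P n1 n2) m =
  'i * n1%:~R * Tcoef C m P n1 n2.
Proof.
apply: (sder_dual_Tcoef (pi := fst)) => // k ab.
by rewrite /Tu_coef /= exprS !mulrA.
Qed.

Lemma sder_dual_Tcoef_y m P n1 n2 :
  sder_dual (fun k => (k.1, k.2.+1)) (fun m' => Tcoef C m' P n1 n2) m =
  'i * n2%:~R * Tcoef C m P n1 n2.
Proof.
apply: (sder_dual_Tcoef (pi := snd)) => // k ab.
by rewrite /Tu_coef /= exprS mulrCA.
Qed.

Lemma sign_Tu_coef k n1 n2 :
  (-1) ^+ (k.1 + k.2) * (('i * n1%:~R) ^+ k.1 * ('i * n2%:~R) ^+ k.2) =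
  Tu_coef C k (- n2, - n1).
Proof.
rewrite /Tu_coef /= !intrN !mulrN (exprNn ('i * n1%:~R)) (exprNn ('i * n2%:~R)).
by rewrite exprD mulrACA.
Qed.

Lemma pairing_varder f d P n1 n2 : Tdom f ->
  pairing (varder f) d (fun m => Tcoef C m P n1 n2) =
  \sum_(k \in [set: nat * nat])
    Tu_coef C k (- n2, - n1) * pairing (sdu k f) d (fun m => Tcoef C m P n1 n2).
Proof.
move=> dom_f; set phi := fun m => _; set n := size P.
have hom_phi : homogeneous phi n by apply: homogeneous_Tcoef.
pose ex k : nat * nat := (k.1.+1, k.2); pose ey k : nat * nat := (k.1, k.2.+1).
pose Y k := iter k.2 (sder ey) (sdu k f); pose X k := iter k.1 (sder ex) (Y k).
have fin_sdu k : finite_layer (sdu k f) d n by apply/finite_layer_sdu/dom_f.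
have fin_Y k : finite_layer (Y k) d n by apply/finite_layer_iter_sder/fin_sdu.
have fin_X k : finite_layer (X k) d n by apply/finite_layer_iter_sder/fin_Y.
transitivity (\sum_(k \in [set: nat * nat]) (-1) ^+ (k.1 + k.2) * pairing (X k) d phi).
  rewrite /pairing /varder /fsum; under eq_fsbigr => m _ do rewrite mulr_fsuml.
  rewrite exchange_fsumT.
    by apply: eq_fsbigr => k _; rewrite mulr_fsumr; apply: eq_fsbigr => m _; rewrite mulrA.
  have /finite_layer_mem fin_f := dom_f d n.+1.
  apply: sub_finite_set (finite_setXL (fun k _ => fin_X k) (finite_image snd fin_f)).
  move=> [m k] /=; rewrite !mulf_eq0 !negb_or => /andP [/andP [_ X_neq0] /hom_phi size_m].
  split; first by split.
  have [m1 /iter_sder_supp [m2 sdu_neq0 size_m2] size_m1] := iter_sder_supp X_neq0.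
  exists (k +` m2, k) => //; split; last exact: mset1D1.
  split; last by rewrite size_mset1D size_m2 size_m1 size_m.
  by move: sdu_neq0; rewrite /sdu mulf_eq0 negb_or => /andP [].
apply: eq_fsbigr => k _.
rewrite (pairing_iter_sder k.1 (fin_Y k) hom_phi (fun m => sder_dual_Tcoef_x m P n1 n2)).
rewrite (pairing_iter_sder k.2 (fin_sdu k) hom_phi (fun m => sder_dual_Tcoef_y m P n1 n2)).
by rewrite -sign_Tu_coef !mulrA.
Qed.

Lemma pairing_varder_Tcoef f d P n1 n2 : Tdom f ->
  pairing (varder f) d (fun m => Tcoef C m P n1 n2) =
  ((P (- n2, - n1)).+1)%:R * pairing f d (fun m => Tcoef C m ((- n2, - n1) +` P) 0 0).
Proof.
move=> dom_f; rewrite pairing_varder //.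
under eq_fsbigr => k _ do rewrite pairing_sdu /pairing mulr_fsumr.
rewrite exchange_fsumT; last first.
  have /finite_layer_mem fin_f := dom_f d (size P).+1.
  apply: sub_finite_set (finite_image (fun mk => (mk.2, mk.1)) fin_f) => -[k m] /=.
  rewrite !mulf_eq0 !negb_or pnatr_eq0 -lt0n mset_gt0.
  move=> /and3P [_ f_neq0 /andP [km /Tcoef_size size_mk]].
  by exists (m, k); rewrite //= (size_msetB1 km) size_mk.
rewrite /pairing mulr_fsumr; apply: eq_fsbigr => m _.
rewrite mulrCA Tcoef_chain_rule /= !sub0r !opprK -fsum_mset mulr_fsumr.
by apply: eq_fsbigr => k _; ring.
Qed.

End VariationalDerivative.

Theorem lemma5p1 (C : numClosedFieldType) (g : bidx -> C) :
  g \in (@W C) ->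
  forall f : sidx -> C, Tdom f -> T0 f = g ->
  Tmap (varder f) = rhs g.
Proof.
(* Membership of g in W is already witnessed by f. *)
move=> _ f dom_f <-; apply: funext => -[[d P] [n1 n2]].
by rewrite Tmap_pairing pairing_varder_Tcoef // rhsE /bdp /= T0_pairing.
Qed.
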